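(* Let $\mathbb{H}$ be a quasiconcave classical entropy. Then its maximal extension is additive on classical channels: for classical channels $\mathcal{N}$ from $X$ to $Y$ and $\mathcal{M}$ from $X'$ to $Y'$, $\overline{\mathbb{H}}(YY'|XX')_{\mathcal{N}\otimes\mathcal{M}}=\overline{\mathbb{H}}(Y|X)_{\mathcal{N}}+\overline{\mathbb{H}}(Y'|X')_{\mathcal{M}}$.
   Context: A classical entropy is a function $\mathbb{H}$ on $\bigcup_{n}\mathrm{Prob}(n)$ that is Schur-concave ($\mathbf{p}\succ\mathbf{q}\Rightarrow\mathbb{H}(\mathbf{p})\le\mathbb{H}(\mathbf{q})$, comparing vectors of different lengths after zero-padding) and additive under tensor products; quasiconcave means $\mathbb{H}(\sum_i\lambda_i\mathbf{p}_i)\ge\min_i\mathbb{H}(\mathbf{p}_i)$. Classical channels are column-stochastic matrices; $\mathcal{N}\otimes\mathcal{M}$ has columns $\mathcal{N}(\mathbf{e}_x)\otimes\mathcal{M}(\mathbf{e}_{x'})$. Classical channel majorization (same output): $\mathcal{N}\succ\mathcal{M}$ iff $\mathcal{M}=\mathcal{D}^{YZ\to Y}\circ(\mathcal{N}\otimes\mathrm{id}^Z)\circ\mathcal{S}^{X'\to XZ}$ for classical channels $\mathcal{S},\mathcal{D}$ with $\mathcal{D}(\cdot\otimes\mathbf{e}_z)$ doubly stochastic for all $z$; different output sizes are compared after zero-padding. Probability vectors are channels with trivial input. The maximal extension is $\overline{\mathbb{H}}(Y|X)_{\mathcal{N}}:=\inf\{\mathbb{H}(\mathbf{q}):\mathcal{N}\succ\mathbf{q}\}$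 over probability vectors of arbitrary finite length. *)

From HB Require Import structures.
From mathcomp Require Import all_boot all_order all_algebra.
From mathcomp Require Import mxtens.
From mathcomp Require Import classical_sets reals.

Set Implicit Arguments.
Unset Strict Implicit.
Unset Printing Implicit Defensive.

Import Order.TTheory GRing.Theory Num.Theory.
Local Open Scope ring_scope.
Local Open Scope classical_set_scope.

Section Defs.
Variable R : realType.

(* A classical channel from X (|X| = nx) to Y (|Y| = ny): a column-stochastic
   matrix N with N y x = probability of output y on input x. *)
Definition channel (ny nx : nat) (N : 'M[R]_(ny, nx)) : Prop :=
  (forall y x, 0 <= N y x) /\ (forall x, \sum_(y < ny) N y x = 1).

Definition prob (n : nat) (p : 'cV[R]_n) : Prop := channel p.

Definition doubly_stochastic (n : nat) (D : 'M[R]_n) : Prop :=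
  (forall i j, 0 <= D i j) /\ (forall j, \sum_(i < n) D i j = 1)
  /\ (forall i, \sum_(j < n) D i j = 1).

(* Tensor product of channels / vectors: (N ⊗ M) (y,y') (x,x') = N y x * M y' x',
   pairs being encoded by mxtens_index. *)
Definition chan_tens (ny nx ny' nx' : nat) (N : 'M[R]_(ny, nx))
  (M : 'M[R]_(ny', nx')) : 'M[R]_(ny * ny', nx * nx') := tensmx N M.

Definition pad_out (ny nx : nat) (k : nat) (N : 'M[R]_(ny, nx)) : 'M[R]_(k, nx) :=
  \matrix_(i < k, j < nx)
    match @insub nat (fun t => t < ny)%N _ (val i) with
    | Some i' => N i' j
    | None => 0
    end.

(* Classical channel majorization N ≻ M (outputs zero-padded to a common size
   k = max(|Y|,|Y'|)):  M = D^{YZ->Y} ∘ (N ⊗ id^Z) ∘ S^{X'->XZ}, with S, D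
   classical channels and D(· ⊗ e_z) doubly stochastic for every z. *)
Definition chan_majorizes (ny nx ny' nx' : nat) (N : 'M[R]_(ny, nx))
  (M : 'M[R]_(ny', nx')) : Prop :=
  let k := maxn ny ny' in
  exists (nz : nat) (S : 'M[R]_(nx * nz, nx')) (D : 'M[R]_(k, k * nz)),
    [/\ channel S, channel D,
        (forall z : 'I_nz,
           doubly_stochastic (\matrix_(i < k, j < k) D i (mxtens_index (j, z))))
      & pad_out k M = D *m (tensmx (pad_out k N) (1%:M : 'M[R]_nz)) *m S].

Definition majorizes (m n : nat) (p : 'cV[R]_m) (q : 'cV[R]_n) : Prop :=
  chan_majorizes p q.

Definition entropy_fun := forall n : nat, 'cV[R]_n -> R.

Definition schur_concave (H : entropy_fun) : Prop :=
  forall m n (p : 'cV[R]_m) (q : 'cV[R]_n), prob p -> prob q ->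
    majorizes p q -> H m p <= H n q.

Definition additive (H : entropy_fun) : Prop :=
  forall m n (p : 'cV[R]_m) (q : 'cV[R]_n), prob p -> prob q ->
    H (m * n)%N (chan_tens p q) = H m p + H n q.

Definition classical_entropy (H : entropy_fun) : Prop :=
  schur_concave H /\ additive H.

Definition quasiconcave (H : entropy_fun) : Prop :=
  forall n k (lam : 'cV[R]_k.+1) (ps : 'I_k.+1 -> 'cV[R]_n),
    prob lam -> (forall i, prob (ps i)) ->
    \big[Num.min/H n (ps ord0)]_(i < k.+1) H n (ps i)
      <= H n (\sum_(i < k.+1) lam i 0 *: ps i).

Definition max_ext (H : entropy_fun) (ny nx : nat) (N : 'M[R]_(ny, nx)) : R :=
  inf [set r : R | exists (m : nat) (q : 'cV[R]_m),
                     [/\ prob q, chan_majorizes N q & r = H m q]].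

End Defs.

From HB Require Import structures.
From mathcomp Require Import all_boot all_order all_algebra.
From mathcomp Require Import mxtens.
From mathcomp Require Import classical_sets reals.

(* A channel N ≻ q factors q through one input column per letter x of X and
   per environment letter z: the zero-padded q is the S-weighted mixture of
   the vectors D_z (N e_x), each obtained from the column N e_x by a doubly
   stochastic map.  Quasiconcavity picks one mixture component whose entropy
   is at most H(q), and Schur concavity bounds it below by H(N e_x).  Hence
   the maximal extension is the least entropy of an output column,
   Hbar(N) = min_x H(N e_x); the columns of N ⊗ M are the products
   N e_x ⊗ M e_x', so additivity of H gives additivity of Hbar. *)

Set Implicit Arguments.
Unset Strict Implicit.
Unset Printing Implicit Defensive.

Import Order.TTheory GRing.Theory Num.Theory.
Local Open Scope ring_scope.

Section StochasticMatrices.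
Variable R : realType.

Lemma sum_mxtens_index m n (F : 'I_(m * n) -> R) :
  \sum_(k < m * n) F k = \sum_(i < m) \sum_(j < n) F (mxtens_index (i, j)).
Proof.
rewrite pair_big /= (reindex (@mxtens_index m n)) /=.
  by apply: eq_bigr => -[i j].
by exists (@mxtens_unindex m n) => k _; rewrite ?mxtens_indexK ?mxtens_unindexK.
Qed.

Lemma pad_out_id n c (A : 'M[R]_(n, c)) : pad_out n A = A.
Proof. by apply/matrixP => i j; rewrite mxE valK. Qed.

Lemma pad_out_ge0 a c k (A : 'M[R]_(a, c)) :
  (forall i j, 0 <= A i j) -> forall i j, 0 <= pad_out k A i j.
Proof. by move=> A_ge0 i j; rewrite mxE; case: insub. Qed.

Lemma sum_pad_out a c k (A : 'M[R]_(a, c)) j : (a <= k)%N ->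
  \sum_(i < k) pad_out k A i j = \sum_(i < a) A i j.
Proof.
move=> /subnKC <-; rewrite big_split_ord /= [X in _ + X]big1 ?addr0.
  apply: eq_bigr => i _; rewrite mxE; case: insubP => [u _ Eu|]; last first.
    by rewrite /= ltn_ord.
  by congr (A _ j); apply: val_inj.
move=> i _; rewrite mxE; case: insubP => [u|//].
by rewrite /= ltnNge leq_addr.
Qed.

Lemma col_pad_out a c k (A : 'M[R]_(a, c)) j :
  col j (pad_out k A) = pad_out k (col j A).
Proof. by apply/matrixP => i l; rewrite !mxE; case: insub => // u; rewrite mxE. Qed.

Lemma prob_col ny nx (N : 'M[R]_(ny, nx)) x : channel N -> prob (col x N).
Proof.
case=> N_ge0 sumN; split=> [i j|j]; first by rewrite mxE.
by rewrite -(sumN x); apply: eq_bigr => i _; rewrite mxE.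
Qed.

Lemma prob_pad_out m k (q : 'cV[R]_m) : (m <= k)%N -> prob q ->
  prob (pad_out k q).
Proof.
move=> mk [q_ge0 sumq]; split=> [|j]; first exact: pad_out_ge0.
by rewrite sum_pad_out.
Qed.

Lemma doubly_stochastic1 n : doubly_stochastic (1%:M : 'M[R]_n).
Proof.
split=> [i j|]; first by rewrite mxE ler0n.
split=> j; rewrite (bigD1 j) //= big1 ?addr0 ?mxE ?eqxx // => i /negbTE ij.
  by rewrite mxE ij.
by rewrite mxE eq_sym ij.
Qed.

Lemma doubly_stochastic_channel n (D : 'M[R]_n) :
  doubly_stochastic D -> channel D.
Proof. by case=> D_ge0 [sumD _]. Qed.

Lemma channel_mulmx m n p (A : 'M[R]_(m, n)) (B : 'M[R]_(n, p)) :
  channel A -> channel B -> channel (A *m B).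
Proof.
move=> [A_ge0 sumA] [B_ge0 sumB]; split=> [i j|j].
  by rewrite mxE; apply: sumr_ge0 => l _; apply: mulr_ge0.
under eq_bigr do rewrite mxE.
rewrite exchange_big /= -(sumB j); apply: eq_bigr => l _.
by rewrite -mulr_suml sumA mul1r.
Qed.

Lemma channel_tens ny nx ny' nx' (N : 'M[R]_(ny, nx)) (M : 'M[R]_(ny', nx')) :
  channel N -> channel M -> channel (chan_tens N M).
Proof.
move=> [N_ge0 sumN] [M_ge0 sumM]; split=> [i j|j].
  by rewrite mxE mulr_ge0.
rewrite sum_mxtens_index.
under eq_bigr do under eq_bigr do rewrite mxE mxtens_indexK /=.
by under eq_bigr do rewrite -mulr_sumr sumM mulr1.
Qed.

Lemma col_tens ny nx ny' nx' (N : 'M[R]_(ny, nx)) (M : 'M[R]_(ny', nx')) x x' :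
  col (mxtens_index (x, x')) (chan_tens N M) = chan_tens (col x N) (col x' M).
Proof. by apply/matrixP => i j; rewrite !mxE mxtens_indexK. Qed.

Definition mxblock_tens k p nz (D : 'M[R]_(p, k * nz)) (z : 'I_nz) : 'M[R]_(p, k) :=
  \matrix_(i < p, j < k) D i (mxtens_index (j, z)).

Lemma mulmx_tensmx1_cV p k n nz (D : 'M[R]_(p, k * nz)) (A : 'M[R]_(k, n))
  (s : 'cV[R]_(n * nz)) :
  D *m tensmx A (1%:M : 'M[R]_nz) *m s =
  \sum_l s l 0 *: (mxblock_tens D (mxtens_unindex l).2 *m col (mxtens_unindex l).1 A).
Proof.
apply/matrixP => i j; rewrite mxE summxE (ord1 j).
apply: eq_bigr => l _; rewrite [RHS]mxE [LHS]mulrC; congr (_ * _).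
case: (mxtens_indexP l) => x z; rewrite mxtens_indexK !mxE sum_mxtens_index.
apply: eq_bigr => y _; rewrite (bigD1 z) //= big1 => [|w /negbTE wz].
  by rewrite tensmxE !mxE eqxx mulr1 addr0.
by rewrite tensmxE [1%:M w z]mxE wz !mulr0.
Qed.

End StochasticMatrices.

Section Majorization.
Variable R : realType.

(* The case of a trivial environment (|Z| = 1) of channel majorization. *)
Lemma chan_majorizes_mulmx a c b d k (N : 'M[R]_(a, c)) (M : 'M[R]_(b, d))
  (D : 'M[R]_k) (S : 'M[R]_(c, d)) :
  maxn a b = k -> doubly_stochastic D -> channel S ->
  pad_out k M = D *m pad_out k N *m S -> chan_majorizes N M.
Proof.
move=> eK; subst k => dsD [S_ge0 sumS] eqM.
have [D_ge0 [sumD _]] := dsD.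
exists 1%N, (\matrix_(l, j) S (mxtens_unindex l).1 j),
  (\matrix_(i, l) D i (mxtens_unindex l).1); split.
- split=> [l j|j]; first by rewrite mxE.
  rewrite sum_mxtens_index -[RHS](sumS j); apply: eq_bigr => i _.
  by rewrite big_ord1 mxE mxtens_indexK.
- split=> [i l|l]; first by rewrite mxE.
  by rewrite -[RHS](sumD (mxtens_unindex l).1); apply: eq_bigr => i _; rewrite mxE.
- move=> z; set Dz := (X in doubly_stochastic X).
  suff -> : Dz = D by [].
  by apply/matrixP => i j; rewrite !mxE mxtens_indexK.
- apply/matrixP => i j; rewrite eqM [RHS]mxE sum_mxtens_index mxE.
  apply: eq_bigr => l _; rewrite big_ord1 !mxE mxtens_indexK sum_mxtens_index /=.
  congr (_ * _); apply: eq_bigr => m _.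
  rewrite big_ord1 !mxE !mxtens_indexK /= mulr1.
  by congr (D i _ * _); apply: val_inj; rewrite /= muln1 addn0 divn1.
Qed.

Lemma chan_majorizes_col ny nx (N : 'M[R]_(ny, nx)) x : chan_majorizes N (col x N).
Proof.
apply: (@chan_majorizes_mulmx _ _ _ _ ny _ _ 1%:M (col x 1%:M)).
- exact: maxnn.
- exact: doubly_stochastic1.
- exact/prob_col/doubly_stochastic_channel/doubly_stochastic1.
by rewrite mul1mx (colE x 1%:M) mul1mx -colE col_pad_out.
Qed.

Lemma majorizes_mulmx_pad a b (p : 'cV[R]_a) (D : 'M[R]_b) :
  (a <= b)%N -> doubly_stochastic D -> majorizes p (D *m pad_out b p).
Proof.
move=> ab dsD; apply: (@chan_majorizes_mulmx _ _ _ _ b _ _ D 1%:M) => //.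
- exact/maxn_idPr.
- exact/doubly_stochastic_channel/doubly_stochastic1.
by rewrite pad_out_id mulmx1.
Qed.

Lemma majorizes_unpad m k (q : 'cV[R]_m) : (m <= k)%N -> majorizes (pad_out k q) q.
Proof.
move=> mk; apply: (@chan_majorizes_mulmx _ _ _ _ k _ _ 1%:M 1%:M).
- exact/maxn_idPl.
- exact: doubly_stochastic1.
- exact/doubly_stochastic_channel/doubly_stochastic1.
by rewrite pad_out_id mul1mx mulmx1.
Qed.

End Majorization.

Lemma arg_min_le d (T : orderType d) (I : finType) (i0 : I) (F : I -> T) j :
  (F [arg min_(i < i0) F i] <= F j)%O.
Proof. by case: arg_minP => // i _; apply. Qed.

Lemma inf_eq_min (R : realType) (E : set R) r :
  E r -> (forall e, E e -> r <= e) -> inf E = r.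
Proof.
move=> Er rlb; apply/eqP; rewrite eq_le; apply/andP; split.
  by apply: ge_inf => //; exists r.
by apply: lb_le_inf => //; exists r.
Qed.

Section Entropy.
Variables (R : realType) (H : entropy_fun R).
Arguments H : clear implicits.
Hypotheses (H_schur : schur_concave H) (H_qc : quasiconcave H).

Lemma quasiconcave_le_mixture n k (lam : 'cV[R]_k) (ps : 'I_k -> 'cV[R]_n) :
  prob lam -> (forall i, prob (ps i)) ->
  exists i, H n (ps i) <= H n (\sum_(i < k) lam i 0 *: ps i).
Proof.
case: k lam ps => [|k] lam ps plam pps.
  by case: plam => _ /(_ ord0); rewrite big_ord0 => /eqP; rewrite eq_sym oner_eq0.
exists [arg min_(i < ord0) H n (ps i)]%O.
apply: le_trans (H_qc plam pps); apply/bigmin_geP.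
by split=> [|i _]; apply: (arg_min_le _ (fun i => H n (ps i))).
Qed.

Lemma chan_majorizes_col_le ny nx (N : 'M[R]_(ny, nx)) m (q : 'cV[R]_m) :
  channel N -> prob q -> chan_majorizes N q ->
  exists x, H ny (col x N) <= H m q.
Proof.
move=> chN pq [nz [S [D [chS chD dsD]]]].
move: (maxn ny m) (leq_maxl ny m) (leq_maxr ny m) D dsD chD => k nyk mk D dsD _ eqq.
pose v l := mxblock_tens D (mxtens_unindex l).2 *m col (mxtens_unindex l).1 (pad_out k N).
have decq : pad_out k q = \sum_l S l 0 *: v l by rewrite eqq mulmx_tensmx1_cV.
have pv l : prob (v l).
  apply: channel_mulmx; first exact/doubly_stochastic_channel/dsD.
  by rewrite col_pad_out; apply/prob_pad_out/prob_col.
have [l] := quasiconcave_le_mixture chS pv; rewrite -decq => Hvq.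
exists (mxtens_unindex l).1; apply: (le_trans (y := H k (v l))).
  apply: H_schur => //; first exact: prob_col.
  by rewrite /v col_pad_out; apply: majorizes_mulmx_pad nyk (dsD _).
apply: le_trans Hvq _; apply: H_schur => //; first exact: prob_pad_out.
exact: majorizes_unpad.
Qed.

Lemma max_ext_min_col ny nx (N : 'M[R]_(ny, nx)) x0 :
  channel N -> (forall x, H ny (col x0 N) <= H ny (col x N)) ->
  max_ext H N = H ny (col x0 N).
Proof.
move=> chN x0_min; apply: inf_eq_min.
  by exists ny, (col x0 N); split=> //; [exact: prob_col | exact: chan_majorizes_col].
move=> _ [m [q [pq Nq ->]]].
have [x Hx] := chan_majorizes_col_le chN pq Nq.
exact: le_trans (x0_min x) Hx.
Qed.

End Entropy.

Theorem mainTheorem16 (R : realType) (H : entropy_fun R) :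
  classical_entropy H -> quasiconcave H ->
  forall (nx ny nx' ny' : nat) (N : 'M[R]_(ny, nx)) (M : 'M[R]_(ny', nx')),
    (0 < nx)%N -> (0 < nx')%N -> channel N -> channel M ->
    max_ext H (chan_tens N M) = max_ext H N + max_ext H M.
Proof.
move=> [H_schur H_add] H_qc nx ny nx' ny' N M nx_gt0 nx'_gt0 chN chM.
have x0_min := arg_min_le (Ordinal nx_gt0) (fun x => H ny (col x N)).
have x0'_min := arg_min_le (Ordinal nx'_gt0) (fun x => H ny' (col x M)).
have H_col_tens x x' : H (ny * ny')%N (col (mxtens_index (x, x')) (chan_tens N M))
    = H ny (col x N) + H ny' (col x' M).
  by rewrite col_tens H_add //; exact: prob_col.
rewrite (max_ext_min_col H_schur H_qc chN x0_min).
rewrite (max_ext_min_col H_schur H_qc chM x0'_min).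
rewrite -H_col_tens; apply: max_ext_min_col => // [|l].
  exact: channel_tens.
case: (mxtens_indexP l) => x x'; rewrite !H_col_tens.
exact: lerD.
Qed.
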